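(* Fix $a\in(0,1/2]$ and $\beta\in(\frac12,1)$. For each $n$ let $k=2\lfloor \beta n/2\rfloor$ and let $\mathbf{x}^*\in\mathbb{R}^n$ be the vector whose only possibly nonzero entries are the $k$-th and $(k+1)$-th, \[ x_k^*=\frac{1+2\left(\frac kn+\frac1n\right)^{2}-2\left(\frac kn+\frac1n\right)-\frac1n}{\binom nk\,2\frac kn\left(2\frac kn-1+\frac1n\left(2\frac kn+\frac2n-1\right)\right)},\qquad x_{k+1}^*=\frac{1-\frac kn}{\binom n{k+1}\left(2\frac kn-1+\frac1n\left(2\frac kn+\frac2n-1\right)\right)}. \] Then for all sufficiently large $n$, $\mathbf{x}^*$ is a feasible point of the linear program defining $\overline{\Lambda}(n;a)$, and the value of its objective at $\mathbf{x}^*$ converges, as $n\to\infty$, to \[ -\left[1+(1-2\beta)\left(\tfrac1a-1\right)\right]\frac{1}{2\beta(2\beta-1)}. \] Consequently $\liminf_{n\to\infty}\overline{\Lambda}(n;a)\ge \sup_{\beta\in(1/2,1)}\left(-\left[1+(1-2\beta)(\frac1a-1)\right]\frac{1}{2\beta(2\beta-1)}\right)=\theta(a)$, where $\theta(a)=\frac{(1-\sqrt a)^2}{a}$ for $0<a<\frac14$ (the supremum being attained at $\beta=\frac{1}{2(1-\sqrt a)}$) and $\theta(a)=\frac{1}{2a}-1$ for $\frac14\le a\le\frac12$.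
   Context: For integers $n\ge1$, $k\in[0:n]$ and real $x$, the Krawtchouk polynomial is $K_k(x)=K_k^{(n)}(x):=\sum_{j=0}^{k}(-1)^{j}\binom{x}{j}\binom{n-x}{k-j}$, with generalized binomial coefficients $\binom{x}{j}=\frac{x(x-1)\cdots(x-j+1)}{j!}$. Here $[m:n]=\{m,m+1,\dots,n\}$. For real $a\in(0,1/2]$, $\overline{\Lambda}(n;a)$ is the optimal value of the linear program: maximize $-\sum_{k=1}^{n}\left[K_k(0)+K_k(1)\left(\frac1a-1\right)\right]x_k$ over $(x_1,\dots,x_n)\in\mathbb{R}^n$ subject to $x_k\ge0$ for $k\in[1:n]$ and $\sum_{k=1}^{n}[K_k(1)-K_k(i)]x_k\ge -1$ for all $i\in[2:n]$. *)

From Stdlib Require Import Reals Lra Lia ZArith.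
Open Scope R_scope.

Fixpoint falling (x : R) (j : nat) : R :=
  match j with
  | O => 1
  | S m => falling x m * (x - INR m)
  end.

Definition gbinom (x : R) (j : nat) : R := falling x j / INR (fact j).

Definition Kraw (n k : nat) (x : R) : R :=
  sum_f_R0 (fun j => (-1) ^ j * gbinom x j * gbinom (INR n - x) (k - j)) k.

Fixpoint sum1 (n : nat) (f : nat -> R) : R :=
  match n with
  | O => 0
  | S m => sum1 m f + f (S m)
  end.

(* A point of R^n is represented by x : nat -> R, using entries x 1, ..., x n. *)
Definition LP_feasible (n : nat) (x : nat -> R) : Prop :=
  (forall k : nat, (1 <= k <= n)%nat -> 0 <= x k) /\
  (forall i : nat, (2 <= i <= n)%nat ->
     sum1 n (fun k => (Kraw n k 1 - Kraw n k (INR i)) * x k) >= -1).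

Definition LP_objective (n : nat) (a : R) (x : nat -> R) : R :=
  - sum1 n (fun k => (Kraw n k 0 + Kraw n k 1 * (1 / a - 1)) * x k).

(* set of objective values attained at feasible points; Lambda_bar(n;a) is its sup *)
Definition LP_values (n : nat) (a : R) (v : R) : Prop :=
  exists x : nat -> R, LP_feasible n x /\ v = LP_objective n a x.

Definition kk (beta : R) (n : nat) : nat :=
  (2 * Z.to_nat (Int_part (beta * INR n / 2)))%nat.

Definition xstar (beta : R) (n : nat) (j : nat) : R :=
  let k := kk beta n in
  let t := INR k / INR n in
  let e := 1 / INR n in
  let D := 2 * t - 1 + e * (2 * t + 2 * e - 1) in
  if Nat.eqb j k then
    (1 + 2 * (t + e) ^ 2 - 2 * (t + e) - e) / (C n k * (2 * t) * D)
  else if Nat.eqb j (S k) then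
    (1 - t) / (C n (S k) * D)
  else 0.

Definition limit_value (a beta : R) : R :=
  - (1 + (1 - 2 * beta) * (1 / a - 1)) * (1 / (2 * beta * (2 * beta - 1))).

Definition theta (a : R) : R :=
  if Rlt_dec a (1/4) then (1 - sqrt a) ^ 2 / a else 1 / (2 * a) - 1.

(* Write u_j(i) = K_j(i) / C(n, j), A = C(n, k) x_k and B = C(n, k+1) x_(k+1); every constraint
   of the linear program then reads (u_k(1) - u_k(i)) A + (u_(k+1)(1) - u_(k+1)(i)) B >= -1.
   The point x* makes the constraints i = 2 and i = n tight, k is even so that u(n - i) = +-u(i),
   and all other constraints hold as soon as |u_j(i)| <= rho^3 + d for 3 <= i <= n/2, where
   rho = 2 beta - 1 and d < rho^2 (1 - rho). That bound comes from the three-term recurrence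
   (n - i) u(i+1) + i u(i-1) = (n - 2j) u(i): for small i the values alternate in sign and decay
   like rho^i, and beyond the turning point 4 x (1 - x) = rho^2 of i = x n an energy argument
   gives |u(i)| = O(n^(-1/2)). The objective at x* converges by continuity of the weights A, B,
   and the supremum over beta of the limits is an explicit one-variable optimisation. *)

From Stdlib Require Import Arith Reals Lra Lia Factorial ZArith Classical.
From Coquelicot Require Import Rcomplements Rbar Hierarchy Lim_seq.
From mathcomp Require all_boot all_algebra Rstruct ring.
Open Scope R_scope.

Lemma falling_succ (x : R) (m : nat) : falling x (S m) = x * falling (x - 1) m.
Proof.
  induction m as [|m IH]; [simpl; ring|].
  change (falling x (S (S m))) with (falling x (S m) * (x - INR (S m))).
  change (falling (x - 1) (S m)) with (falling (x - 1) m * (x - 1 - INR m)).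
  rewrite IH, S_INR. ring.
Qed.

Lemma gbinom_0 (x : R) : gbinom x 0 = 1.
Proof. unfold gbinom; simpl; field. Qed.

Lemma gbinom_0_S (j : nat) : gbinom 0 (S j) = 0.
Proof. unfold gbinom. rewrite falling_succ. unfold Rdiv. ring. Qed.

Lemma gbinom_pascal (x : R) (j : nat) : gbinom (x + 1) (S j) = gbinom x (S j) + gbinom x j.
Proof.
  unfold gbinom. rewrite falling_succ. replace (x + 1 - 1) with x by ring.
  change (falling x (S j)) with (falling x j * (x - INR j)).
  change (fact (S j)) with (S j * fact j)%nat. rewrite mult_INR, S_INR.
  assert (Hf := INR_fact_neq_0 j). assert (Hj := pos_INR j).
  field. split; [exact Hf | lra].
Qed.

Lemma falling_INR (n k : nat) : (k <= n)%nat ->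
  falling (INR n) k = INR (fact n) / INR (fact (n - k)).
Proof.
  induction k as [|k IH]; intros Hk.
  - simpl. rewrite Nat.sub_0_r. field. apply INR_fact_neq_0.
  - change (falling (INR n) (S k)) with (falling (INR n) k * (INR n - INR k)).
    rewrite IH by lia.
    replace (n - k)%nat with (S (n - S k)) by lia.
    change (fact (S (n - S k))) with (S (n - S k) * fact (n - S k))%nat.
    rewrite mult_INR, S_INR, minus_INR, S_INR by lia.
    assert (Hf := INR_fact_neq_0 (n - S k)).
    assert (Hkn : INR (S k) <= INR n) by (apply le_INR; lia). rewrite S_INR in Hkn.
    field. split; [exact Hf | lra].
Qed.

Lemma gbinom_INR (n k : nat) : (k <= n)%nat -> gbinom (INR n) k = C n k.
Proof.
  intros Hk. unfold gbinom, C. rewrite falling_INR by exact Hk.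
  field. split; apply INR_fact_neq_0.
Qed.

Module KrawtchoukPoly.
Import all_boot all_algebra Rstruct ring.
Import GRing.Theory.
Local Open Scope ring_scope.

Lemma coef_1addX_exp (m j : nat) : ((1 + 'X : {poly R}) ^+ m)`_j = gbinom (INR m) j.
Proof.
  elim: m j => [|m IH] [|j].
  - by rewrite expr0 coefC gbinom_0.
  - by rewrite expr0 coefC gbinom_0_S.
  - by rewrite exprSr mulrDr mulr1 coefD coefMX S_INR /= IH !gbinom_0 addr0.
  - by rewrite exprSr mulrDr mulr1 coefD coefMX S_INR /= !IH gbinom_pascal RplusE.
Qed.

Lemma coef_1subX_exp (m j : nat) :
  ((1 - 'X : {poly R}) ^+ m)`_j = (-1) ^+ j * gbinom (INR m) j.
Proof.
  elim: m j => [|m IH] [|j].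
  - by rewrite expr0 coefC gbinom_0 mulr1.
  - by rewrite expr0 coefC gbinom_0_S mulr0.
  - by rewrite exprSr mulrBr mulr1 coefB coefMX S_INR /= IH !gbinom_0 subr0.
  - rewrite exprSr mulrBr mulr1 coefB coefMX S_INR /= !IH gbinom_pascal RplusE exprS.
    ring.
Qed.

Lemma sum_f_R0_big (f : nat -> R) (k : nat) : sum_f_R0 f k = \sum_(j < k.+1) f j.
Proof. by elim: k => [|k IH]; rewrite ?big_ord1 // big_ord_recr /= -IH. Qed.

(* K_k(i) is the coefficient of z^k in (1 - z)^i (1 + z)^(n - i). *)
Definition kraw_poly (n i : nat) : {poly R} := (1 - 'X) ^+ i * (1 + 'X) ^+ (n - i).

Lemma Kraw_coef (n k i : nat) : le i n -> Kraw n k (INR i) = (kraw_poly n i)`_k.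
Proof.
  move=> /leP Hi. rewrite /Kraw sum_f_R0_big coefM.
  apply: eq_bigr => j _.
  by rewrite coef_1subX_exp coef_1addX_exp -minus_INR ?RpowE //; apply/leP.
Qed.

Lemma coef_kraw_poly_0 (n k : nat) : le k n -> (kraw_poly n 0)`_k = C n k.
Proof.
  move=> /leP Hk.
  by rewrite /kraw_poly expr0 mul1r subn0 coef_1addX_exp gbinom_INR //; apply/leP.
Qed.

Lemma kraw_poly_rec (n i : nat) : (i < n)%N ->
  (n - i)%:R *: kraw_poly n i.+1 + i%:R *: kraw_poly n i.-1
  = n%:R *: kraw_poly n i - 2%:R *: ('X * (kraw_poly n i)^`()).
Proof.
  move=> Hi. apply/eqP; rewrite -subr_eq0; apply/eqP.
  rewrite /kraw_poly; case: i Hi => [|i] Hi.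
  - rewrite subn0 /= expr0 mul1r scale0r addr0 expr1.
    have -> : n = n.-1.+1 by lia.
    rewrite subn1 /= deriv_exp derivD derivC derivX add0r mul1r exprS !scaler_nat.
    ring.
  - have [l ->] : exists l, n = (l + i.+2)%N by exists (n - i.+2)%N; lia.
    have -> : (l + i.+2 - i.+1 = l.+1)%N by lia.
    have -> : (l + i.+2 - i.+2 = l)%N by lia.
    have -> : (l + i.+2 - i = l.+2)%N by lia.
    rewrite /= derivM !deriv_exp derivB derivD derivC derivX sub0r add0r !scaler_nat !exprS.
    ring.
Qed.

Lemma kraw_poly_reflect (n i k : nat) : le i n ->
  (kraw_poly n (n - i))`_k = (-1) ^+ k * (kraw_poly n i)`_k.
Proof.
  move=> /leP Hi. rewrite /kraw_poly subKn // coefMr coefM big_distrr.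
  apply: eq_bigr => -[j /= Hj] _.
  rewrite !coef_1subX_exp !coef_1addX_exp.
  have -> : (-1) ^+ k = (-1) ^+ (k - j) * (-1) ^+ j :> R by rewrite -exprD subnK.
  have Hsq : (-1) ^+ j * (-1) ^+ j = 1 :> R by rewrite -expr2 sqrr_sign.
  transitivity ((-1) ^+ (k - j) * ((-1) ^+ j * (-1) ^+ j)
    * gbinom (INR (n - i)) (k - j) * gbinom (INR i) j); last ring.
  by rewrite Hsq mulr1.
Qed.

Lemma kraw_poly_rec_coef (n k i : nat) : lt i n ->
  (n - i)%:R * (kraw_poly n i.+1)`_k + i%:R * (kraw_poly n i.-1)`_k
  = (n%:R - 2%:R * k%:R) * (kraw_poly n i)`_k.
Proof.
  move=> /ltP /kraw_poly_rec /(congr1 (fun p : {poly R} => p`_k)).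
  rewrite !coefD !coefZ coefN coefZ coefXM.
  case: k => [|k] /=; first by rewrite mulr0 subr0 => ->; ring.
  by rewrite coef_deriv -mulr_natl => ->; ring.
Qed.

End KrawtchoukPoly.

Lemma Kraw_at_0 (n k : nat) : (k <= n)%nat -> Kraw n k 0 = C n k.
Proof.
  intros Hk. change 0 with (INR 0).
  rewrite KrawtchoukPoly.Kraw_coef by lia. exact (KrawtchoukPoly.coef_kraw_poly_0 n k Hk).
Qed.

(* At i = 0 the truncated i - 1 is harmless: its coefficient INR i vanishes. *)
Lemma Kraw_rec (n k i : nat) : (i < n)%nat ->
  (INR n - INR i) * Kraw n k (INR (S i)) + INR i * Kraw n k (INR (i - 1))
  = (INR n - 2 * INR k) * Kraw n k (INR i).
Proof.
  intros Hi. rewrite !KrawtchoukPoly.Kraw_coef by lia.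
  rewrite <- minus_INR by lia. replace (i - 1)%nat with (Nat.pred i) by lia.
  rewrite !Rstruct.INRE. exact (KrawtchoukPoly.kraw_poly_rec_coef n k i Hi).
Qed.

Lemma Kraw_reflect (n k i : nat) : (i <= n)%nat ->
  Kraw n k (INR (n - i)) = (-1) ^ k * Kraw n k (INR i).
Proof.
  intros Hi. rewrite !KrawtchoukPoly.Kraw_coef by lia.
  rewrite Rstruct.RpowE. exact (KrawtchoukPoly.kraw_poly_reflect n i k Hi).
Qed.

Lemma C_pos (n k : nat) : 0 < C n k.
Proof.
  unfold C. apply Rdiv_lt_0_compat.
  - apply lt_0_INR, lt_O_fact.
  - apply Rmult_lt_0_compat; apply lt_0_INR, lt_O_fact.
Qed.

Definition kraw_norm (n k i : nat) : R := Kraw n k (INR i) / C n k.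

Lemma Kraw_kraw_norm (n k i : nat) : Kraw n k (INR i) = C n k * kraw_norm n k i.
Proof. assert (HC := C_pos n k). unfold kraw_norm. field. lra. Qed.

Lemma Kraw_at_1 (n k : nat) : Kraw n k 1 = C n k * kraw_norm n k 1.
Proof. exact (Kraw_kraw_norm n k 1). Qed.

Lemma kraw_norm_0 (n k : nat) : (k <= n)%nat -> kraw_norm n k 0 = 1.
Proof.
  intros Hk. assert (HC := C_pos n k).
  unfold kraw_norm. simpl INR. rewrite Kraw_at_0 by exact Hk. field. lra.
Qed.

Lemma kraw_norm_rec (n k i : nat) : (i < n)%nat ->
  (INR n - INR i) * kraw_norm n k (S i) + INR i * kraw_norm n k (i - 1)
  = (INR n - 2 * INR k) * kraw_norm n k i.
Proof.
  intros Hi. unfold kraw_norm, Rdiv.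
  transitivity (((INR n - INR i) * Kraw n k (INR (S i)) + INR i * Kraw n k (INR (i - 1)))
    * / C n k); [ring|].
  rewrite Kraw_rec by exact Hi. ring.
Qed.

Lemma kraw_norm_reflect (n k i : nat) : (i <= n)%nat ->
  kraw_norm n k (n - i) = (-1) ^ k * kraw_norm n k i.
Proof. intros Hi. unfold kraw_norm, Rdiv. rewrite Kraw_reflect by exact Hi. ring. Qed.

Lemma kraw_norm_1 (n k : nat) : (1 <= n)%nat -> (k <= n)%nat ->
  kraw_norm n k 1 = 1 - 2 * (INR k / INR n).
Proof.
  intros Hn Hk. assert (HN : 0 < INR n) by (apply lt_0_INR; lia).
  assert (E := kraw_norm_rec n k 0 ltac:(lia)). simpl Nat.sub in E.
  rewrite kraw_norm_0 in E by exact Hk. simpl INR in E.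
  apply Rmult_eq_reg_l with (INR n); [|lra].
  replace (INR n * (1 - 2 * (INR k / INR n))) with ((INR n - 2 * INR k) * 1) by (field; lra).
  rewrite <- E. ring.
Qed.

Lemma kraw_norm_2 (n k : nat) : (2 <= n)%nat -> (k <= n)%nat ->
  kraw_norm n k 2 = ((1 - 2 * (INR k / INR n)) ^ 2 - 1 / INR n) / (1 - 1 / INR n).
Proof.
  intros Hn Hk. assert (HN : 1 < INR n) by (apply (lt_INR 1); lia).
  assert (E := kraw_norm_rec n k 1 ltac:(lia)). simpl Nat.sub in E.
  rewrite kraw_norm_0, kraw_norm_1 in E by lia. simpl INR in E.
  apply Rmult_eq_reg_l with (INR n - 1); [|lra].
  replace ((INR n - 1) * (((1 - 2 * (INR k / INR n)) ^ 2 - 1 / INR n) / (1 - 1 / INR n)))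
    with ((INR n - 2 * INR k) * (1 - 2 * (INR k / INR n)) - 1) by (field; lra).
  rewrite <- E. ring.
Qed.

Lemma le_INR_double (i n : nat) : (2 * i <= n)%nat -> 2 * INR i <= INR n.
Proof. intros H. change 2 with (INR 2). rewrite <- mult_INR. apply le_INR, H. Qed.

Lemma pow_le_pow_of_le_1 (x : R) (i j : nat) : 0 <= x <= 1 -> (j <= i)%nat -> x ^ i <= x ^ j.
Proof.
  intros Hx Hij. induction Hij; [lra|]. simpl.
  assert (0 <= x ^ m) by (apply pow_le; lra). nra.
Qed.

Section ThreeTermRecurrence.

Variables (n : nat) (r : R) (u : nat -> R).
Hypothesis u_0 : u 0%nat = 1.
Hypothesis u_1 : u 1%nat = - r.
Hypothesis u_rec : forall i, (1 <= i < n)%nat ->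
  (INR n - INR i) * u (S i) + INR i * u (i - 1)%nat = - r * INR n * u i.

Let alt (i : nat) : R := (-1) ^ i * u i.

Lemma alt_rec (i : nat) : (1 <= i < n)%nat ->
  (INR n - INR i) * alt (S i) + INR i * alt (i - 1)%nat = r * INR n * alt i.
Proof.
  intros Hi. destruct i as [|j]; [lia|]. unfold alt.
  replace (S j - 1)%nat with j in * by lia.
  assert (E := u_rec (S j) Hi). replace (S j - 1)%nat with j in E by lia.
  simpl pow. transitivity ((-1) ^ j * ((INR n - INR (S j)) * u (S (S j)) + INR (S j) * u j));
    [ring | rewrite E; ring].
Qed.

Lemma alt_decay_step (s : R) (i : nat) : 0 < s -> s <= r -> r < 1 -> (1 <= i < n)%nat ->
  INR i * (1 - s * s) <= INR n * (r * s - s * s) ->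
  0 < alt i -> alt i <= r * alt (i - 1)%nat -> s * alt (i - 1)%nat <= alt i ->
  0 < alt (S i) /\ alt (S i) <= r * alt i /\ s * alt i <= alt (S i).
Proof.
  intros Hs Hsr Hr Hi Hcond Hb Hup Hlo.
  assert (E := alt_rec i Hi).
  set (a := alt (i - 1)%nat) in *. set (b := alt i) in *. set (c := alt (S i)) in *.
  set (N := INR n) in *. set (X := INR i) in *.
  assert (HX : 0 < X) by (apply lt_0_INR; lia).
  assert (HXN : X < N) by (apply lt_INR; lia).
  assert (Ha : 0 < a) by nra.
  assert (Hc_up : c <= r * b).
  { assert (Hrb : X * (r * b) <= X * a) by (apply Rmult_le_compat_l; nra).
    apply Rmult_le_reg_l with (N - X); lra. }
  assert (Hc_lo : s * b <= c).
  { assert (H1 : X * (s * a) <= X * b) by (apply Rmult_le_compat_l; lra).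
    assert (H2 : b * (X * (1 - s * s)) <= b * (N * (r * s - s * s)))
      by (apply Rmult_le_compat_l; lra).
    apply Rmult_le_reg_l with (s * (N - X)); [nra|]. nra. }
  split; [nra | split; assumption].
Qed.

Lemma abs_le_pow_decay (s : R) (I : nat) : 0 < s -> s <= r -> r < 1 -> (I < n)%nat ->
  INR I * (1 - s * s) <= INR n * (r * s - s * s) ->
  forall i, (i <= S I)%nat -> Rabs (u i) <= r ^ i.
Proof.
  intros Hs Hsr Hr HI Hcond.
  assert (Inv : forall i, (1 <= i <= S I)%nat ->
    0 < alt i /\ alt i <= r * alt (i - 1)%nat /\ s * alt (i - 1)%nat <= alt i).
  { induction i as [|i IH]; intros Hi; [lia|].
    destruct i as [|i].
    - unfold alt. simpl. rewrite u_0, u_1. lra.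
    - destruct (IH ltac:(lia)) as [Hb [Hup Hlo]].
      replace (S (S i) - 1)%nat with (S i) by lia.
      apply alt_decay_step; try assumption; [lia|].
      apply Rle_trans with (INR I * (1 - s * s)); [|exact Hcond].
      apply Rmult_le_compat_r; [nra | apply le_INR; lia]. }
  assert (Hpos : forall i, (i <= S I)%nat -> 0 < alt i /\ alt i <= r ^ i).
  { induction i as [|i IH]; intros Hi.
    - unfold alt. simpl. rewrite u_0. lra.
    - destruct (Inv (S i) ltac:(lia)) as [Hp [Hup _]].
      replace (S i - 1)%nat with i in Hup by lia.
      destruct (IH ltac:(lia)) as [_ Hi2]. split; [exact Hp|]. simpl. nra. }
  intros i Hi. destruct (Hpos i Hi) as [Hp Hle].
  replace (Rabs (u i)) with (Rabs (alt i)) by (unfold alt; rewrite Rabs_mult, pow_1_abs; ring).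
  rewrite Rabs_right; lra.
Qed.

Let pair_max (i : nat) : R := Rmax (Rabs (u i)) (Rabs (u (i - 1)%nat)).

Lemma abs_le_pair_max (i : nat) : Rabs (u i) <= pair_max i.
Proof. apply Rmax_l. Qed.

Lemma pair_max_step (i : nat) : 0 <= r <= 1 -> (1 <= i)%nat -> (2 * i <= n)%nat ->
  Rabs (u (S i)) <= 3 * pair_max i.
Proof.
  intros Hr Hi Hin.
  assert (E := u_rec i ltac:(lia)).
  assert (HX : 0 < INR i) by (apply lt_0_INR; lia).
  assert (HXN : 2 * INR i <= INR n) by (apply le_INR_double; lia).
  assert (Ha := Rmax_l (Rabs (u i)) (Rabs (u (i - 1)%nat))).
  assert (Hb := Rmax_r (Rabs (u i)) (Rabs (u (i - 1)%nat))). fold (pair_max i) in Ha, Hb.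
  assert (HM : 0 <= pair_max i) by (eapply Rle_trans; [apply Rabs_pos | exact Ha]).
  (* (n - i) |u (i+1)| <= r n |u i| + i |u (i-1)| <= (n + i) M <= 3 (n - i) M when 2 i <= n *)
  assert (Habs : (INR n - INR i) * Rabs (u (S i))
                 <= r * INR n * Rabs (u i) + INR i * Rabs (u (i - 1)%nat)).
  { replace ((INR n - INR i) * Rabs (u (S i))) with (Rabs ((INR n - INR i) * u (S i)))
      by (rewrite Rabs_mult, (Rabs_right (INR n - INR i)) by lra; reflexivity).
    replace ((INR n - INR i) * u (S i)) with (- (r * INR n * u i) - INR i * u (i - 1)%nat) by lra.
    unfold Rminus. eapply Rle_trans; [apply Rabs_triang|].
    rewrite !Rabs_Ropp, !Rabs_mult, (Rabs_right r), (Rabs_right (INR n)), (Rabs_right (INR i))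
      by lra.
    lra. }
  apply Rmult_le_reg_l with (INR n - INR i); [lra|].
  assert (r * INR n * Rabs (u i) <= INR n * pair_max i).
  { apply Rle_trans with (1 * INR n * pair_max i); [|lra].
    apply Rmult_le_compat; try nra. apply Rabs_pos. }
  assert (INR i * Rabs (u (i - 1)%nat) <= INR i * pair_max i) by (apply Rmult_le_compat_l; lra).
  nra.
Qed.

Lemma pair_max_growth (a w : nat) : 0 <= r <= 1 -> (1 <= a)%nat -> (2 * (a + w) <= n)%nat ->
  pair_max (a + w) <= 3 ^ w * pair_max a.
Proof.
  intros Hr Ha. induction w as [|w IH]; intros Hw.
  - rewrite Nat.add_0_r. simpl. lra.
  - assert (IH' := IH ltac:(lia)).
    assert (Step := pair_max_step (a + w) Hr ltac:(lia) ltac:(lia)).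
    assert (Hc := abs_le_pair_max (a + w)).
    assert (HM : 0 <= pair_max (a + w)) by (eapply Rle_trans; [apply Rabs_pos | exact Hc]).
    replace (a + S w)%nat with (S (a + w)) by lia.
    unfold pair_max at 1. replace (S (a + w) - 1)%nat with (a + w)%nat by lia.
    simpl pow. apply Rmax_lub; nra.
Qed.

Let energy (i : nat) : R :=
  (INR n - INR i + 1) * u i ^ 2 + INR i * u (i - 1)%nat ^ 2 + r * INR n * u i * u (i - 1)%nat.

Lemma energy_succ (i : nat) : (1 <= i < n)%nat ->
  (INR n - INR i) * energy (S i) = INR i * energy i + (INR n - 2 * INR i) * u i ^ 2.
Proof.
  intros Hi. assert (E := u_rec i Hi). unfold energy.
  replace (S i - 1)%nat with i by lia. rewrite S_INR.
  replace ((INR n - INR i) * ((INR n - (INR i + 1) + 1) * u (S i) ^ 2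
      + (INR i + 1) * u i ^ 2 + r * INR n * u (S i) * u i))
    with (((INR n - INR i) * u (S i)) ^ 2 + (INR n - INR i) * (INR i + 1) * u i ^ 2
      + r * INR n * ((INR n - INR i) * u (S i)) * u i) by ring.
  replace ((INR n - INR i) * u (S i)) with (- r * INR n * u i - INR i * u (i - 1)%nat) by lra.
  ring.
Qed.

Lemma energy_le_1 (i : nat) : (2 * i <= n)%nat ->
  (forall j, (j <= i)%nat -> Rabs (u j) <= 1) -> energy (S i) <= 1.
Proof.
  induction i as [|i IH]; intros Hi Hb.
  - unfold energy. simpl. rewrite u_0, u_1. lra.
  - assert (IH' := IH ltac:(lia) ltac:(intros; apply Hb; lia)).
    assert (E := energy_succ (S i) ltac:(lia)).
    assert (HX : 0 < INR (S i)) by (apply lt_0_INR; lia).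
    assert (HXN : 2 * INR (S i) <= INR n) by (apply le_INR_double; lia).
    assert (Hu : u (S i) ^ 2 <= 1).
    { assert (H := Hb (S i) ltac:(lia)). rewrite <- pow2_abs.
      assert (0 <= Rabs (u (S i))) by apply Rabs_pos. nra. }
    apply Rmult_le_reg_l with (INR n - INR (S i)); [lra|]. nra.
Qed.

(* 4 i * energy i - (4 i (n - i + 1) - r^2 n^2) u_i^2 is the square (2 i u_(i-1) + r n u_i)^2. *)
Lemma energy_lower_bound (i : nat) :
  (4 * INR i * (INR n - INR i + 1) - r * r * INR n * INR n) * u i ^ 2 <= 4 * INR i * energy i.
Proof.
  unfold energy. assert (0 <= (2 * INR i * u (i - 1)%nat + r * INR n * u i) ^ 2) by apply pow2_ge_0.
  nra.
Qed.

Lemma abs_le_of_energy (d : R) (a i : nat) : 0 < d -> (a < i)%nat -> (2 * i <= n)%nat ->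
  2 * INR n <= d * d * (4 * INR a * (INR n - INR a) - r * r * INR n * INR n) ->
  energy i <= 1 -> Rabs (u i) <= d.
Proof.
  intros Hd Hai Hin Hcond HE.
  assert (HL := energy_lower_bound i).
  assert (HX : INR a + 1 <= INR i) by (rewrite <- S_INR; apply le_INR; lia).
  assert (HXN : 2 * INR i <= INR n) by (apply le_INR_double; lia).
  assert (Ha0 : 0 <= INR a) by apply pos_INR.
  set (Da := 4 * INR a * (INR n - INR a) - r * r * INR n * INR n) in *.
  set (Di := 4 * INR i * (INR n - INR i + 1) - r * r * INR n * INR n) in *.
  assert (HDa : 0 < Da) by nra.
  assert (HDi : Da <= Di) by (unfold Da, Di; nra).
  assert (Hsq : u i ^ 2 <= d * d).
  { apply Rmult_le_reg_l with Di; [lra|].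
    assert (4 * INR i * energy i <= 4 * INR i) by nra. nra. }
  rewrite <- pow2_abs in Hsq. assert (0 <= Rabs (u i)) by apply Rabs_pos. nra.
Qed.

Lemma abs_le_window (s : R) (I W i : nat) :
  0 < s -> s <= r -> r < 1 -> (2 * (I + 1 + W) <= n)%nat ->
  INR I * (1 - s * s) <= INR n * (r * s - s * s) ->
  (S I <= i <= I + 1 + W)%nat -> Rabs (u i) <= 3 ^ W * r ^ I.
Proof.
  intros Hs Hsr Hr HIW Hcond Hi.
  assert (Hr01 : 0 <= r <= 1) by lra.
  assert (Hdecay := abs_le_pow_decay s I Hs Hsr Hr ltac:(lia) Hcond).
  assert (G := pair_max_growth (S I) (i - S I) Hr01 ltac:(lia) ltac:(lia)).
  replace (S I + (i - S I))%nat with i in G by lia.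
  assert (P : pair_max (S I) <= r ^ I).
  { unfold pair_max. replace (S I - 1)%nat with I by lia. apply Rmax_lub; [|apply Hdecay; lia].
    eapply Rle_trans; [apply Hdecay; lia | apply pow_le_pow_of_le_1; [lra | lia]]. }
  assert (H3 : 3 ^ (i - S I) <= 3 ^ W) by (apply Rle_pow; [lra | lia]).
  assert (0 <= r ^ I) by (apply pow_le; lra).
  assert (0 <= pair_max (S I)) by (eapply Rle_trans; [apply Rabs_pos | apply abs_le_pair_max]).
  apply Rle_trans with (3 ^ (i - S I) * pair_max (S I));
    [eapply Rle_trans; [apply abs_le_pair_max | exact G]|].
  apply Rmult_le_compat; try lra. apply pow_le. lra.
Qed.

(* Three regimes: up to I the sequence decays like r^i with alternating signs, over the next W
   steps it can grow at most by a factor 3 per step, and beyond the turning point the energy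
   bound forces |u i| = O(1 / sqrt n). *)
Lemma abs_le_Rmax_pow3 (s d : R) (I W : nat) :
  0 < s -> s <= r -> r < 1 -> 0 < d <= 1 -> (1 <= I)%nat -> (2 * (I + 1 + W) <= n)%nat ->
  INR I * (1 - s * s) <= INR n * (r * s - s * s) ->
  3 ^ W * r ^ I <= d ->
  2 * INR n <= d * d * (4 * INR (I + 1 + W) * (INR n - INR (I + 1 + W)) - r * r * INR n * INR n) ->
  forall i, (3 <= i)%nat -> (2 * i <= n)%nat -> Rabs (u i) <= Rmax (r ^ 3) d.
Proof.
  intros Hs Hsr Hr Hd HI HIW Hcond Hwin Hen.
  assert (Hdecay := abs_le_pow_decay s I Hs Hsr Hr ltac:(lia) Hcond).
  assert (Hr3 : r ^ 3 <= 1) by (apply pow_le_pow_of_le_1 with (j := 0%nat); [lra | lia]).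
  assert (Hmax := Rmax_l (r ^ 3) d). assert (Hmax' := Rmax_r (r ^ 3) d).
  assert (Main : forall i, (2 * i <= n)%nat ->
    Rabs (u i) <= 1 /\ ((3 <= i)%nat -> Rabs (u i) <= Rmax (r ^ 3) d)).
  { intro i. induction i as [i IH] using (well_founded_induction lt_wf). intros Hin.
    destruct (le_lt_dec i (S I)) as [H1 | H1]; [|destruct (le_lt_dec i (I + 1 + W)) as [H2 | H2]].
    - assert (Hi := Hdecay i H1). split.
      + eapply Rle_trans; [exact Hi | apply pow_le_pow_of_le_1 with (j := 0%nat); [lra | lia]].
      + intros H3. eapply Rle_trans; [exact Hi|]. eapply Rle_trans; [|exact Hmax].
        apply pow_le_pow_of_le_1; [lra | lia].
    - assert (Hi := abs_le_window s I W i Hs Hsr Hr HIW Hcond ltac:(lia)).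
      split; [lra | intros _; lra].
    - assert (HE : energy i <= 1).
      { replace i with (S (i - 1)) by lia. apply energy_le_1; [lia|].
        intros j Hj. apply (IH j); lia. }
      assert (Hi := abs_le_of_energy d (I + 1 + W) i ltac:(lra) H2 Hin Hen HE).
      split; [lra | intros _; lra]. }
  intros i H3 Hin. apply (Main i Hin), H3.
Qed.

End ThreeTermRecurrence.

Lemma sum1_ext (n : nat) (f g : nat -> R) : (forall j, f j = g j) -> sum1 n f = sum1 n g.
Proof. intros H. induction n as [|n IH]; simpl; [reflexivity | rewrite IH, H; reflexivity]. Qed.

Lemma sum1_plus (n : nat) (f g : nat -> R) :
  sum1 n (fun j => f j + g j) = sum1 n f + sum1 n g.
Proof. induction n as [|n IH]; simpl; [ring | rewrite IH; ring]. Qed.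

Lemma sum1_indicator (n k : nat) (c : R) : (1 <= k)%nat ->
  sum1 n (fun j => if Nat.eqb j k then c else 0) = if Nat.leb k n then c else 0.
Proof.
  intros Hk. induction n as [|n IH]; cbn [sum1].
  - destruct k; [lia | reflexivity].
  - rewrite IH. destruct (Nat.eqb_spec (S n) k), (Nat.leb_spec k n), (Nat.leb_spec k (S n));
      try lia; simpl; ring.
Qed.

Lemma sum1_two_point (n k : nat) (f : nat -> R) : (1 <= k)%nat -> (S k <= n)%nat ->
  (forall j, j <> k -> j <> S k -> f j = 0) -> sum1 n f = f k + f (S k).
Proof.
  intros Hk Hkn Hf.
  rewrite (sum1_ext n f (fun j => (if Nat.eqb j k then f k else 0)
                                  + (if Nat.eqb j (S k) then f (S k) else 0))).
  - rewrite sum1_plus, !sum1_indicator by lia.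
    rewrite (proj2 (Nat.leb_le k n)), (proj2 (Nat.leb_le (S k) n)) by lia. reflexivity.
  - intros j. destruct (Nat.eqb_spec j k), (Nat.eqb_spec j (S k)); subst; try lia;
      rewrite ?Hf by assumption; ring.
Qed.

Section TwoPointSupport.

Variables (n k : nat) (x : nat -> R).
Hypothesis k_pos : (1 <= k)%nat.
Hypothesis Sk_le_n : (S k <= n)%nat.
Hypothesis x_support : forall j, j <> k -> j <> S k -> x j = 0.

Lemma LP_feasible_two_point : 0 <= x k -> 0 <= x (S k) ->
  (forall i, (2 <= i <= n)%nat ->
    (kraw_norm n k 1 - kraw_norm n k i) * (C n k * x k)
    + (kraw_norm n (S k) 1 - kraw_norm n (S k) i) * (C n (S k) * x (S k)) >= -1) ->
  LP_feasible n x.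
Proof.
  intros Hxk HxSk Hcon. split.
  - intros j _. destruct (Nat.eq_dec j k) as [->|]; [exact Hxk|].
    destruct (Nat.eq_dec j (S k)) as [->|]; [exact HxSk|]. rewrite x_support by assumption. lra.
  - intros i Hi. rewrite (sum1_two_point n k) by (try lia; intros j H1 H2; rewrite x_support by assumption; ring).
    rewrite !Kraw_at_1, !Kraw_kraw_norm.
    replace (C n k * kraw_norm n k 1 - C n k * kraw_norm n k i) with
      ((kraw_norm n k 1 - kraw_norm n k i) * C n k) by ring.
    replace (C n (S k) * kraw_norm n (S k) 1 - C n (S k) * kraw_norm n (S k) i) with
      ((kraw_norm n (S k) 1 - kraw_norm n (S k) i) * C n (S k)) by ring.
    rewrite !Rmult_assoc. apply Hcon, Hi.
Qed.

Lemma LP_objective_two_point (a : R) :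
  LP_objective n a x =
  - ((1 + kraw_norm n k 1 * (1 / a - 1)) * (C n k * x k)
     + (1 + kraw_norm n (S k) 1 * (1 / a - 1)) * (C n (S k) * x (S k))).
Proof.
  unfold LP_objective.
  rewrite (sum1_two_point n k) by (try lia; intros j H1 H2; rewrite x_support by assumption; ring).
  rewrite !Kraw_at_0, !Kraw_at_1 by lia. ring.
Qed.

End TwoPointSupport.

(* For even k, reflection gives u (n - i) = u i and v (n - i) = - v i, so the constraints for
   i > n / 2 mirror those for i < n / 2 except near the ends i = n - 2, n - 1, n. *)
Lemma two_point_constraints (n k : nat) (A B M : R) :
  Nat.Even k -> (1 <= k)%nat -> (k + 2 <= n)%nat -> 0 <= A -> 0 <= B ->
  (forall i, (3 <= i)%nat -> (2 * i <= n)%nat ->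
     Rabs (kraw_norm n k i) <= M /\ Rabs (kraw_norm n (S k) i) <= M) ->
  (kraw_norm n k 1 - kraw_norm n k 2) * A + (kraw_norm n (S k) 1 - kraw_norm n (S k) 2) * B >= -1 ->
  (kraw_norm n k 1 - 1) * A + (kraw_norm n (S k) 1 + 1) * B >= -1 ->
  2 * kraw_norm n (S k) 1 * B >= -1 ->
  (kraw_norm n k 1 - kraw_norm n k 2) * A + (kraw_norm n (S k) 1 + kraw_norm n (S k) 2) * B >= -1 ->
  (kraw_norm n k 1 - M) * A + (kraw_norm n (S k) 1 - M) * B >= -1 ->
  forall i, (2 <= i <= n)%nat ->
    (kraw_norm n k 1 - kraw_norm n k i) * A + (kraw_norm n (S k) 1 - kraw_norm n (S k) i) * B >= -1.
Proof.
  intros [p Hp] Hk Hkn HA HB Hbound H2 Hn Hn1 Hn2 Hgen i Hi.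
  set (u := kraw_norm n k) in *. set (v := kraw_norm n (S k)) in *.
  assert (Hu : forall j, (j <= n)%nat -> u (n - j)%nat = u j).
  { intros j Hj. unfold u. rewrite kraw_norm_reflect, Hp, pow_1_even by exact Hj. ring. }
  assert (Hv : forall j, (j <= n)%nat -> v (n - j)%nat = - v j).
  { intros j Hj. unfold v. rewrite kraw_norm_reflect, Hp by exact Hj.
    rewrite <- tech_pow_Rmult, pow_1_even. ring. }
  assert (Hu0 : u 0%nat = 1) by (unfold u; apply kraw_norm_0; lia).
  assert (Hv0 : v 0%nat = 1) by (unfold v; apply kraw_norm_0; lia).
  destruct (Nat.eq_dec i 2) as [->|]; [exact H2|].
  destruct (Nat.eq_dec i n) as [->|].
  { rewrite <- (Nat.sub_0_r n) at 1 2. rewrite Hu, Hv, Hu0, Hv0 by lia.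
    lra. }
  destruct (Nat.eq_dec i (n - 1)) as [->|].
  { rewrite Hu, Hv by lia. lra. }
  destruct (Nat.eq_dec i (n - 2)) as [->|].
  { rewrite Hu, Hv by lia. lra. }
  assert (Hb : Rabs (u i) <= M /\ Rabs (v i) <= M).
  { destruct (le_lt_dec (2 * i) n).
    - apply Hbound; lia.
    - replace i with (n - (n - i))%nat by lia. rewrite Hu, Hv, Rabs_Ropp by lia. apply Hbound; lia. }
  destruct Hb as [Hbu Hbv].
  assert (u i <= M) by (eapply Rle_trans; [apply Rle_abs | exact Hbu]).
  assert (v i <= M) by (eapply Rle_trans; [apply Rle_abs | exact Hbv]).
  assert (M * A >= u i * A) by (apply Rle_ge, Rmult_le_compat_r; assumption).
  assert (M * B >= v i * B) by (apply Rle_ge, Rmult_le_compat_r; assumption).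
  lra.
Qed.

(* With t = k / n and e = 1 / n, x* = weight_k t e / C(n, k) at k and weight_Sk t e / C(n, k+1)
   at k + 1: the weights that make the constraints i = 2 and i = n tight. *)
Definition weight_den (t e : R) : R := 2 * t - 1 + e * (2 * t + 2 * e - 1).
Definition weight_k (t e : R) : R :=
  (1 + 2 * (t + e) ^ 2 - 2 * (t + e) - e) / (2 * t * weight_den t e).
Definition weight_Sk (t e : R) : R := (1 - t) / weight_den t e.

Lemma weights_tight (t e : R) : t <> 0 -> e <> 1 -> weight_den t e <> 0 ->
  ((1 - 2 * t) - ((1 - 2 * t) ^ 2 - e) / (1 - e)) * weight_k t e
  + ((1 - 2 * (t + e)) - ((1 - 2 * (t + e)) ^ 2 - e) / (1 - e)) * weight_Sk t e = -1 /\
  ((1 - 2 * t) - 1) * weight_k t e + ((1 - 2 * (t + e)) + 1) * weight_Sk t e = -1.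
Proof.
  intros Ht He HD. unfold weight_k, weight_Sk. unfold weight_den in *.
  split; field; repeat split; auto; lra.
Qed.

Definition kratio (beta : R) (n : nat) : R := INR (kk beta n) / INR n.

Lemma kk_even (beta : R) (n : nat) : Nat.Even (kk beta n).
Proof. eexists. reflexivity. Qed.

Lemma xstar_at_k (beta : R) (n : nat) :
  xstar beta n (kk beta n) = weight_k (kratio beta n) (1 / INR n) / C n (kk beta n).
Proof.
  unfold xstar, weight_k, weight_den, kratio. rewrite Nat.eqb_refl.
  unfold Rdiv. rewrite !Rinv_mult. ring.
Qed.

Lemma xstar_at_Sk (beta : R) (n : nat) :
  xstar beta n (S (kk beta n)) = weight_Sk (kratio beta n) (1 / INR n) / C n (S (kk beta n)).
Proof.
  unfold xstar, weight_Sk, weight_den, kratio.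
  rewrite (proj2 (Nat.eqb_neq (S (kk beta n)) (kk beta n))) by lia. rewrite Nat.eqb_refl.
  unfold Rdiv. rewrite !Rinv_mult. ring.
Qed.

Lemma xstar_support (beta : R) (n j : nat) :
  j <> kk beta n -> j <> S (kk beta n) -> xstar beta n j = 0.
Proof.
  intros H1 H2. unfold xstar.
  rewrite (proj2 (Nat.eqb_neq j _) H1), (proj2 (Nat.eqb_neq j _) H2). reflexivity.
Qed.

Lemma kratio_succ (beta : R) (n : nat) : (1 <= n)%nat ->
  INR (S (kk beta n)) / INR n = kratio beta n + 1 / INR n.
Proof.
  intros Hn. assert (0 < INR n) by (apply lt_0_INR; lia).
  unfold kratio. rewrite S_INR. field. lra.
Qed.

Lemma xstar_feasible (beta : R) (n : nat) (M : R) :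
  (1 <= kk beta n)%nat -> (kk beta n + 2 <= n)%nat ->
  0 < weight_den (kratio beta n) (1 / INR n) ->
  0 <= weight_k (kratio beta n) (1 / INR n) -> 0 <= weight_Sk (kratio beta n) (1 / INR n) ->
  (forall i, (3 <= i)%nat -> (2 * i <= n)%nat ->
     Rabs (kraw_norm n (kk beta n) i) <= M /\ Rabs (kraw_norm n (S (kk beta n)) i) <= M) ->
  ((1 - 2 * kratio beta n) - M) * weight_k (kratio beta n) (1 / INR n)
  + ((1 - 2 * (kratio beta n + 1 / INR n)) - M) * weight_Sk (kratio beta n) (1 / INR n) >= -1 ->
  2 * (1 - 2 * (kratio beta n + 1 / INR n)) * weight_Sk (kratio beta n) (1 / INR n) >= -1 ->
  ((1 - 2 * kratio beta n) - ((1 - 2 * kratio beta n) ^ 2 - 1 / INR n) / (1 - 1 / INR n))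
    * weight_k (kratio beta n) (1 / INR n)
  + ((1 - 2 * (kratio beta n + 1 / INR n))
     + ((1 - 2 * (kratio beta n + 1 / INR n)) ^ 2 - 1 / INR n) / (1 - 1 / INR n))
    * weight_Sk (kratio beta n) (1 / INR n) >= -1 ->
  LP_feasible n (xstar beta n).
Proof.
  intros Hk Hkn HD HA HB Hbound Hgen Hn1 Hn2.
  assert (HN : 1 < INR n) by (apply (lt_INR 1); lia).
  assert (Ht : kratio beta n <> 0).
  { assert (0 < INR (kk beta n)) by (apply lt_0_INR; lia).
    apply Rgt_not_eq, Rdiv_lt_0_compat; lra. }
  assert (He : 1 / INR n <> 1).
  { intros H. assert (E : 1 / INR n * INR n = 1 * INR n) by (rewrite H; reflexivity).
    field_simplify in E; lra. }
  assert (HCk := C_pos n (kk beta n)). assert (HCSk := C_pos n (S (kk beta n))).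
  assert (Xk := xstar_at_k beta n). assert (XSk := xstar_at_Sk beta n).
  assert (Hsucc := kratio_succ beta n ltac:(lia)).
  set (k := kk beta n) in *. set (t := kratio beta n) in *. set (e := 1 / INR n) in *.
  destruct (weights_tight t e Ht He ltac:(lra)) as [Tight2 Tightn].
  set (A := weight_k t e) in *. set (B := weight_Sk t e) in *.
  assert (U1 : kraw_norm n k 1 = 1 - 2 * t) by (apply kraw_norm_1; lia).
  assert (V1 : kraw_norm n (S k) 1 = 1 - 2 * (t + e))
    by (rewrite kraw_norm_1, Hsucc by lia; reflexivity).
  assert (U2 : kraw_norm n k 2 = ((1 - 2 * t) ^ 2 - e) / (1 - e)) by (apply kraw_norm_2; lia).
  assert (V2 : kraw_norm n (S k) 2 = ((1 - 2 * (t + e)) ^ 2 - e) / (1 - e))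
    by (rewrite kraw_norm_2, Hsucc by lia; reflexivity).
  apply (LP_feasible_two_point n k); try lia.
  - intros j H1 H2. apply xstar_support; assumption.
  - rewrite Xk. apply Rmult_le_pos; [exact HA | left; apply Rinv_0_lt_compat, HCk].
  - rewrite XSk. apply Rmult_le_pos; [exact HB | left; apply Rinv_0_lt_compat, HCSk].
  - replace (C n k * xstar beta n k) with A by (rewrite Xk; field; lra).
    replace (C n (S k) * xstar beta n (S k)) with B by (rewrite XSk; field; lra).
    apply (two_point_constraints n k A B M (kk_even beta n)); try lia; try lra; [exact Hbound|..].
    all: rewrite ?U1, ?V1, ?U2, ?V2; lra.
Qed.

Lemma xstar_objective (a beta : R) (n : nat) :
  (1 <= kk beta n)%nat -> (S (kk beta n) <= n)%nat ->
  LP_objective n a (xstar beta n) =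
  - ((1 + (1 - 2 * kratio beta n) * (1 / a - 1)) * weight_k (kratio beta n) (1 / INR n)
     + (1 + (1 - 2 * (kratio beta n + 1 / INR n)) * (1 / a - 1))
       * weight_Sk (kratio beta n) (1 / INR n)).
Proof.
  intros Hk Hkn.
  assert (HCk := C_pos n (kk beta n)). assert (HCSk := C_pos n (S (kk beta n))).
  rewrite (LP_objective_two_point n (kk beta n)) by (try lia; apply xstar_support).
  rewrite xstar_at_k, xstar_at_Sk, kraw_norm_1, kraw_norm_1, kratio_succ by lia.
  assert (0 < INR n) by (apply lt_0_INR; lia).
  fold (kratio beta n). set (c := 1 / a - 1). field. repeat split; lra.
Qed.

Lemma is_lim_seq_eq_limit (u : nat -> R) (l1 l2 : R) : is_lim_seq u l1 -> l1 = l2 -> is_lim_seq u l2.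
Proof. intros H <-. exact H. Qed.

Lemma is_lim_seq_opp_R (u : nat -> R) (l : R) : is_lim_seq u l -> is_lim_seq (fun n => - u n) (- l).
Proof. intros H. exact (proj1 (is_lim_seq_opp u l) H). Qed.

Lemma is_lim_seq_pow (u : nat -> R) (l : R) (m : nat) :
  is_lim_seq u l -> is_lim_seq (fun n => u n ^ m) (l ^ m).
Proof.
  intros H. induction m as [|m IH]; simpl; [apply is_lim_seq_const | exact (is_lim_seq_mult' _ _ _ _ H IH)].
Qed.

Ltac lim_arith := repeat match goal with
  | |- is_lim_seq _ _ => eassumption
  | |- is_lim_seq (fun _ => - _) _ => eapply is_lim_seq_opp_R
  | |- is_lim_seq (fun _ => ?c) _ => apply is_lim_seq_const
  | |- is_lim_seq (fun _ => _ + _) _ => eapply is_lim_seq_plus'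
  | |- is_lim_seq (fun _ => _ - _) _ => eapply is_lim_seq_minus'
  | |- is_lim_seq (fun _ => _ * _) _ => eapply is_lim_seq_mult'
  | |- is_lim_seq (fun _ => _ / _) _ => eapply is_lim_seq_div'
  | |- is_lim_seq (fun _ => _ ^ _) _ => apply is_lim_seq_pow
  end.

Lemma eventually_gt_of_lim (u : nat -> R) (l c : R) :
  is_lim_seq u l -> c < l -> eventually (fun n => c < u n).
Proof.
  intros H Hc. apply is_lim_seq_spec in H.
  destruct (H (mkposreal (l - c) ltac:(lra))) as [N HN].
  exists N. intros n Hn. specialize (HN n Hn). simpl in HN. apply Rabs_def2 in HN. lra.
Qed.

Lemma eventually_lt_of_lim (u : nat -> R) (l c : R) :
  is_lim_seq u l -> l < c -> eventually (fun n => u n < c).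
Proof.
  intros H Hc. apply is_lim_seq_spec in H.
  destruct (H (mkposreal (c - l) ltac:(lra))) as [N HN].
  exists N. intros n Hn. specialize (HN n Hn). simpl in HN. apply Rabs_def2 in HN. lra.
Qed.

Lemma eventually_ge_nat (N : nat) : eventually (fun n => (N <= n)%nat).
Proof. exists N. auto. Qed.

Lemma is_lim_seq_inv_INR : is_lim_seq (fun n => 1 / INR n) 0.
Proof.
  eapply is_lim_seq_ext; [|exact (is_lim_seq_inv _ _ is_lim_seq_INR ltac:(discriminate))].
  intros n. simpl. unfold Rdiv. ring.
Qed.

Definition nfloor (z : R) : nat := Z.to_nat (Int_part z).

Lemma nfloor_spec (z : R) : 0 <= z -> INR (nfloor z) <= z /\ z < INR (nfloor z) + 1.
Proof.
  intros Hz. unfold nfloor. destruct (base_Int_part z) as [H1 H2].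
  assert (Hp : (0 <= Int_part z)%Z).
  { assert (H : IZR (-1) < IZR (Int_part z)) by lra. apply lt_IZR in H. lia. }
  rewrite INR_IZR_INZ, Z2Nat.id by exact Hp. lra.
Qed.

Lemma is_lim_seq_floor_ratio (y : R) : 0 <= y ->
  is_lim_seq (fun n => INR (nfloor (y * INR n)) / INR n) y.
Proof.
  intros Hy. assert (He := is_lim_seq_inv_INR).
  apply is_lim_seq_le_le_loc with (u := fun n => y - 1 / INR n) (w := fun n => y).
  - exists 1%nat. intros n Hn. assert (HN : 0 < INR n) by (apply lt_0_INR; lia).
    destruct (nfloor_spec (y * INR n) ltac:(nra)) as [H1 H2].
    assert (Hi : 0 <= / INR n) by (left; apply Rinv_0_lt_compat; lra).
    split.
    + replace (y - 1 / INR n) with ((y * INR n - 1) / INR n) by (field; lra).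
      unfold Rdiv. apply Rmult_le_compat_r; lra.
    + apply Rle_trans with (y * INR n / INR n); [|right; field; lra].
      unfold Rdiv. apply Rmult_le_compat_r; lra.
  - eapply is_lim_seq_eq_limit; [lim_arith | ring].
  - apply is_lim_seq_const.
Qed.

Lemma eventually_nfloor_ge (y : R) (N : nat) : 0 < y ->
  eventually (fun n => (N <= nfloor (y * INR n))%nat).
Proof.
  intros Hy. exists (S (nfloor (INR N / y))). intros n Hn.
  assert (HN := pos_INR N).
  destruct (nfloor_spec (INR N / y) ltac:(apply Rdiv_le_0_compat; lra)) as [_ H1].
  assert (Hn' : INR (S (nfloor (INR N / y))) <= INR n) by (apply le_INR, Hn).
  rewrite S_INR in Hn'.
  assert (H2 : INR N < y * INR n).
  { replace (INR N) with (y * (INR N / y)) by (field; lra). apply Rmult_lt_compat_l; lra. }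
  destruct (nfloor_spec (y * INR n) ltac:(lra)) as [_ H3].
  assert (H4 : INR N < INR (S (nfloor (y * INR n)))) by (rewrite S_INR; lra).
  apply INR_lt in H4. lia.
Qed.

Lemma decay_parameter (rho x : R) : 0 < rho -> 0 < x < 1 / 2 -> 4 * x * (1 - x) < rho * rho ->
  exists s, 0 < s < rho /\ x * (1 - s * s) < rho * s - s * s.
Proof.
  intros Hrho Hx Hturn. set (s := rho / (2 * (1 - x))). exists s. split.
  - split; [apply Rdiv_lt_0_compat; lra|].
    apply Rmult_lt_reg_r with (2 * (1 - x)); [lra|]. unfold s. field_simplify; [nra | lra].
  - assert (E : rho * s - s * s - x * (1 - s * s) = (rho * rho - 4 * x * (1 - x)) / (4 * (1 - x)))
      by (unfold s; field; lra).
    assert (0 < (rho * rho - 4 * x * (1 - x)) / (4 * (1 - x))) by (apply Rdiv_lt_0_compat; lra).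
    lra.
Qed.

(* The turning point x0 of the recurrence solves 4 x0 (1 - x0) = rho^2. With I = L W and
   W ~ y n, the alternating decay reaches I ~ L y n < x0 n and the energy bound applies from
   (L + 1) y n > x0 n on; the W steps in between cost at most 3^W, which the decay
   r^I <= (q^L)^W with q = (1 + rho) / 2 absorbs. *)
Lemma window_parameters (rho : R) : 0 < rho < 1 ->
  exists (L : nat) (y : R), (1 <= L)%nat /\ 3 * ((1 + rho) / 2) ^ L < 1 /\ 0 < y /\
    (INR L + 1) * y < 1 / 2 /\ 4 * (INR L * y) * (1 - INR L * y) < rho * rho /\
    rho * rho < 4 * ((INR L + 1) * y) * (1 - (INR L + 1) * y).
Proof.
  intros Hrho.
  set (sq := sqrt (1 - rho * rho)).
  assert (Hsq2 : sq * sq = 1 - rho * rho) by (apply sqrt_sqrt; nra).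
  assert (Hsq0 : 0 < sq) by (apply sqrt_lt_R0; nra).
  assert (Hsq1 : sq < 1) by nra.
  set (x0 := (1 - sq) / 2).
  assert (Hx0 : 0 < x0 < 1 / 2) by (unfold x0; lra).
  assert (Hturn : 4 * x0 * (1 - x0) = rho * rho) by (unfold x0; nra).
  assert (Hq : Rabs ((1 + rho) / 2) < 1) by (rewrite Rabs_right; lra).
  destruct (pow_lt_1_zero _ Hq (1 / 3) ltac:(lra)) as [N1 HN1].
  set (L := max (max N1 (S (nfloor (1 / sq)))) 1).
  assert (HL1 : (1 <= L)%nat) by lia.
  assert (HLsq : 1 < INR L * sq).
  { destruct (nfloor_spec (1 / sq) ltac:(apply Rdiv_le_0_compat; lra)) as [_ H].
    assert (INR (S (nfloor (1 / sq))) <= INR L) by (apply le_INR; lia). rewrite S_INR in *.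
    replace 1 with (sq * (1 / sq)) at 1 by (field; lra). nra. }
  set (l := INR L) in *. assert (Hl : 1 <= l) by (apply (le_INR 1); lia).
  exists L, (x0 / (l + 1 / 2)). change (INR L) with l.
  set (x1 := l * (x0 / (l + 1 / 2))). set (x2 := (l + 1) * (x0 / (l + 1 / 2))).
  assert (Hx1 : 0 < x1 < x0) by (unfold x1; split;
    [apply Rmult_lt_0_compat; [lra | apply Rdiv_lt_0_compat; lra]
    | apply Rmult_lt_reg_r with (l + 1 / 2); [lra|]; field_simplify; nra]).
  assert (Hx2 : x0 < x2 < 1 / 2) by (unfold x2; split;
    apply Rmult_lt_reg_r with (l + 1 / 2); try lra; field_simplify; unfold x0 in *; nra).
  repeat split; try lia.
  - assert (H := HN1 L ltac:(lia)). rewrite Rabs_right in H; [lra|].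
    apply Rle_ge, pow_le. lra.
  - apply Rdiv_lt_0_compat; lra.
  - lra.
  - assert (0 < (x0 - x1) * (1 - x0 - x1)) by (apply Rmult_lt_0_compat; lra). nra.
  - assert (0 < (x2 - x0) * (1 - x0 - x2)) by (apply Rmult_lt_0_compat; lra). nra.
Qed.

Section EventualDecay.

Variables (rho d : R) (j : nat -> nat) (L : nat) (y s : R).
Hypothesis rho_range : 0 < rho < 1.
Hypothesis d_range : 0 < d <= 1.
Hypothesis j_le : eventually (fun n => (j n <= n)%nat).
Hypothesis r_lim : is_lim_seq (fun n => 2 * (INR (j n) / INR n) - 1) rho.
Hypothesis L_pos : (1 <= L)%nat.
Hypothesis L_contract : 3 * ((1 + rho) / 2) ^ L < 1.
Hypothesis y_pos : 0 < y.
Hypothesis window_below_half : (INR L + 1) * y < 1 / 2.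
Hypothesis s_range : 0 < s < rho.
Hypothesis s_decay : INR L * y * (1 - s * s) < rho * s - s * s.
Hypothesis past_turning : rho * rho < 4 * ((INR L + 1) * y) * (1 - (INR L + 1) * y).

Let r (n : nat) : R := 2 * (INR (j n) / INR n) - 1.
Let W (n : nat) : nat := nfloor (y * INR n).
Let I (n : nat) : nat := (L * W n)%nat.

Lemma is_lim_seq_window_end :
  is_lim_seq (fun n => INR (I n + 1 + W n) / INR n) ((INR L + 1) * y).
Proof.
  assert (HW := is_lim_seq_floor_ratio y ltac:(lra)). assert (He := is_lim_seq_inv_INR).
  apply is_lim_seq_ext_loc
    with (u := fun n => (INR L + 1) * (INR (W n) / INR n) + 1 / INR n).
  - exists 1%nat. intros n Hn. assert (0 < INR n) by (apply lt_0_INR; lia).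
    unfold I. rewrite !plus_INR, mult_INR. simpl INR. field. lra.
  - eapply is_lim_seq_eq_limit; [lim_arith | ring].
Qed.

Lemma eventually_r_range : eventually (fun n => s <= r n <= (1 + rho) / 2).
Proof.
  eapply filter_imp; [|apply filter_and;
    [apply (eventually_gt_of_lim _ _ s r_lim) | apply (eventually_lt_of_lim _ _ ((1 + rho) / 2) r_lim)]];
    [intros n [H1 H2]; unfold r; lra | lra | lra].
Qed.

Lemma eventually_decay_condition :
  eventually (fun n => INR (I n) * (1 - s * s) <= INR n * (r n * s - s * s)).
Proof.
  set (c := (INR L * y * (1 - s * s) + s * s) / s).
  assert (Hc : c < rho) by (unfold c; apply Rmult_lt_reg_r with s; [lra|]; field_simplify; lra).
  apply (filter_imp (fun n => c < r n)); [|exact (eventually_gt_of_lim _ _ c r_lim Hc)].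
  intros n Hn.
  assert (HN := pos_INR n).
  destruct (nfloor_spec (y * INR n) ltac:(nra)) as [HW _]. fold (W n) in HW.
  assert (HI : INR (I n) <= INR L * y * INR n)
    by (unfold I; rewrite mult_INR; rewrite Rmult_assoc; apply Rmult_le_compat_l; [apply pos_INR | lra]).
  assert (Hs : INR L * y * (1 - s * s) <= r n * s - s * s).
  { unfold c in Hn. apply Rmult_lt_compat_r with (r := s) in Hn; [|lra].
    replace ((INR L * y * (1 - s * s) + s * s) / s * s) with (INR L * y * (1 - s * s) + s * s)
      in Hn by (field; lra). lra. }
  assert (H1 : INR (I n) * (1 - s * s) <= INR L * y * INR n * (1 - s * s))
    by (apply Rmult_le_compat_r; nra).
  assert (H2 : INR n * (INR L * y * (1 - s * s)) <= INR n * (r n * s - s * s))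
    by (apply Rmult_le_compat_l; lra).
  lra.
Qed.

Lemma eventually_growth_absorbed :
  eventually (fun n => (1 <= I n)%nat /\ 3 ^ W n * r n ^ I n <= d).
Proof.
  set (q := (1 + rho) / 2).
  assert (Hq : 0 <= q) by (unfold q; lra).
  assert (Hc : Rabs (3 * q ^ L) < 1) by (rewrite Rabs_right; [exact L_contract | apply Rle_ge, Rmult_le_pos, pow_le; lra]).
  destruct (pow_lt_1_zero _ Hc d ltac:(lra)) as [N0 HN0].
  eapply filter_imp; [|apply filter_and; [apply (eventually_nfloor_ge y (max N0 1) y_pos) | exact eventually_r_range]].
  intros n [HWn [Hs Hr]]. fold (W n) in HWn. split; [unfold I; nia|].
  assert (HWq : 3 ^ W n * r n ^ I n <= (3 * q ^ L) ^ W n).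
  { rewrite Rpow_mult_distr, <- pow_mult. unfold I.
    apply Rmult_le_compat_l; [apply pow_le; lra | apply pow_incr; unfold q; lra]. }
  assert (H := HN0 (W n) ltac:(lia)). rewrite Rabs_right in H by (apply Rle_ge, pow_le, Rmult_le_pos, pow_le; lra).
  lra.
Qed.

Lemma eventually_window_inside : eventually (fun n => (2 * (I n + 1 + W n) <= n)%nat).
Proof.
  eapply filter_imp; [|apply filter_and;
    [exact (eventually_lt_of_lim _ _ (1 / 2) is_lim_seq_window_end window_below_half)
    | exact (eventually_ge_nat 1)]].
  intros n [H Hn]. assert (HN : 0 < INR n) by (apply lt_0_INR; lia).
  apply Rmult_lt_compat_r with (r := INR n) in H; [|exact HN].
  replace (INR (I n + 1 + W n) / INR n * INR n) with (INR (I n + 1 + W n)) in H by (field; lra).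
  apply INR_le. rewrite mult_INR. simpl INR. lra.
Qed.

Lemma eventually_energy_condition :
  eventually (fun n => 2 * INR n <= d * d * (4 * INR (I n + 1 + W n) * (INR n - INR (I n + 1 + W n))
                                             - r n * r n * INR n * INR n)).
Proof.
  set (x2 := (INR L + 1) * y).
  assert (Ha := is_lim_seq_window_end). assert (He := is_lim_seq_inv_INR).
  assert (Hlim : is_lim_seq
    (fun n => d * d * (4 * (INR (I n + 1 + W n) / INR n) * (1 - INR (I n + 1 + W n) / INR n)
                       - r n * r n) - 2 * (1 / INR n))
    (d * d * (4 * x2 * (1 - x2) - rho * rho) - 2 * 0)) by lim_arith.
  assert (Hpos : 0 < d * d * (4 * x2 * (1 - x2) - rho * rho) - 2 * 0)
    by (assert (0 < d * d) by nra; unfold x2; nra).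
  eapply filter_imp; [|apply filter_and;
    [exact (eventually_gt_of_lim _ _ 0 Hlim Hpos) | exact (eventually_ge_nat 1)]].
  intros n [H Hn]. assert (HN : 0 < INR n) by (apply lt_0_INR; lia).
  set (a := INR (I n + 1 + W n)) in *.
  assert (E : d * d * (4 * a * (INR n - a) - r n * r n * INR n * INR n) - 2 * INR n
    = INR n * INR n * (d * d * (4 * (a / INR n) * (1 - a / INR n) - r n * r n) - 2 * (1 / INR n)))
    by (field; lra).
  assert (0 <= INR n * INR n * (d * d * (4 * (a / INR n) * (1 - a / INR n) - r n * r n)
                                - 2 * (1 / INR n))) by (left; apply Rmult_lt_0_compat; nra).
  lra.
Qed.

Lemma eventually_kraw_norm_abs_le_of_parameters :
  eventually (fun n => forall i, (3 <= i)%nat -> (2 * i <= n)%nat ->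
    Rabs (kraw_norm n (j n) i) <= Rmax (r n ^ 3) d).
Proof.
  assert (E := filter_and _ _ eventually_r_range (filter_and _ _ eventually_decay_condition
    (filter_and _ _ eventually_growth_absorbed (filter_and _ _ eventually_window_inside
    (filter_and _ _ eventually_energy_condition j_le))))).
  eapply filter_imp; [|exact E].
  intros n [[Hs Hr] [Hdec [[HI Hgrow] [Hin [Hen Hjn]]]]].
  assert (HN : 0 < INR n) by (apply lt_0_INR; lia).
  apply (abs_le_Rmax_pow3 n (r n) (kraw_norm n (j n))) with (s := s) (I := I n) (W := W n);
    try assumption; try lra.
  - apply kraw_norm_0, Hjn.
  - rewrite kraw_norm_1 by lia. unfold r. ring.
  - intros i Hi. rewrite kraw_norm_rec by lia. unfold r. field. lra.
Qed.

End EventualDecay.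

Lemma eventually_kraw_norm_abs_le (rho d : R) (j : nat -> nat) :
  0 < rho < 1 -> 0 < d <= 1 -> eventually (fun n => (j n <= n)%nat) ->
  is_lim_seq (fun n => 2 * (INR (j n) / INR n) - 1) rho ->
  eventually (fun n => forall i, (3 <= i)%nat -> (2 * i <= n)%nat ->
    Rabs (kraw_norm n (j n) i) <= Rmax ((2 * (INR (j n) / INR n) - 1) ^ 3) d).
Proof.
  intros Hrho Hd Hj Hlim.
  destruct (window_parameters rho Hrho) as [L [y [HL [Hq [Hy [Hhalf [Hbefore Hafter]]]]]]].
  assert (HLy : 0 < INR L * y < 1 / 2)
    by (assert (1 <= INR L) by (apply (le_INR 1); lia); split; nra).
  destruct (decay_parameter rho (INR L * y) ltac:(lra) HLy ltac:(lra)) as [s [Hs Hsdec]].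
  exact (eventually_kraw_norm_abs_le_of_parameters rho d j L y s Hrho Hd Hj Hlim HL Hq Hy
           Hhalf Hs ltac:(lra) Hafter).
Qed.

Lemma kk_bounds (beta : R) (n : nat) : 0 < beta ->
  INR (kk beta n) <= beta * INR n /\ beta * INR n - 2 < INR (kk beta n).
Proof.
  intros Hb. assert (HN := pos_INR n).
  destruct (nfloor_spec (beta * INR n / 2) ltac:(nra)) as [H1 H2].
  change (kk beta n) with (2 * nfloor (beta * INR n / 2))%nat.
  rewrite mult_INR. simpl (INR 2). lra.
Qed.

Lemma is_lim_seq_weights (t e : nat -> R) (t0 e0 : R) :
  is_lim_seq t t0 -> is_lim_seq e e0 -> t0 <> 0 -> weight_den t0 e0 <> 0 ->
  is_lim_seq (fun n => weight_den (t n) (e n)) (weight_den t0 e0) /\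
  is_lim_seq (fun n => weight_k (t n) (e n)) (weight_k t0 e0) /\
  is_lim_seq (fun n => weight_Sk (t n) (e n)) (weight_Sk t0 e0).
Proof.
  intros Ht He Ht0 HD. unfold weight_k, weight_Sk. unfold weight_den in *.
  repeat split; lim_arith; try exact HD. apply Rmult_integral_contrapositive; split; [lra | exact HD].
Qed.

Section XstarAsymptotics.

Variable beta : R.
Hypothesis beta_range : 1 / 2 < beta < 1.

Lemma is_lim_seq_kratio : is_lim_seq (kratio beta) beta.
Proof.
  assert (He := is_lim_seq_inv_INR).
  apply is_lim_seq_le_le_loc with (u := fun n => beta - 2 * (1 / INR n)) (w := fun n => beta).
  - exists 1%nat. intros n Hn. assert (HN : 0 < INR n) by (apply lt_0_INR; lia).
    destruct (kk_bounds beta n ltac:(lra)) as [H1 H2]. unfold kratio.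
    assert (Hi : 0 <= / INR n) by (left; apply Rinv_0_lt_compat; lra). split.
    + replace (beta - 2 * (1 / INR n)) with ((beta * INR n - 2) / INR n) by (field; lra).
      unfold Rdiv. apply Rmult_le_compat_r; lra.
    + apply Rle_trans with (beta * INR n / INR n); [|right; field; lra].
      unfold Rdiv. apply Rmult_le_compat_r; lra.
  - eapply is_lim_seq_eq_limit; [lim_arith | ring].
  - apply is_lim_seq_const.
Qed.

Lemma is_lim_seq_xstar_weights :
  is_lim_seq (fun n => weight_den (kratio beta n) (1 / INR n)) (2 * beta - 1) /\
  is_lim_seq (fun n => weight_k (kratio beta n) (1 / INR n)) (weight_k beta 0) /\
  is_lim_seq (fun n => weight_Sk (kratio beta n) (1 / INR n)) (weight_Sk beta 0).
Proof.
  replace (2 * beta - 1) with (weight_den beta 0) by (unfold weight_den; ring).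
  apply is_lim_seq_weights; [exact is_lim_seq_kratio | exact is_lim_seq_inv_INR | lra |].
  unfold weight_den. lra.
Qed.

Lemma eventually_kk_range : eventually (fun n => (1 <= kk beta n)%nat /\ (kk beta n + 2 <= n)%nat).
Proof.
  assert (He := is_lim_seq_inv_INR). assert (Ht := is_lim_seq_kratio).
  assert (Ht2 : is_lim_seq (fun n => kratio beta n + 2 * (1 / INR n)) beta)
    by (eapply is_lim_seq_eq_limit; [lim_arith | ring]).
  eapply filter_imp; [|apply filter_and; [exact (eventually_gt_of_lim _ _ (1 / 2) Ht ltac:(lra))|
    apply filter_and; [exact (eventually_lt_of_lim _ _ 1 Ht2 ltac:(lra)) | exact (eventually_ge_nat 2)]]].
  intros n [H1 [H2 Hn]]. assert (HN : 2 <= INR n) by (apply (le_INR 2); lia).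
  unfold kratio in *.
  apply Rmult_lt_compat_r with (r := INR n) in H1; [|lra].
  apply Rmult_lt_compat_r with (r := INR n) in H2; [|lra].
  replace (INR (kk beta n) / INR n * INR n) with (INR (kk beta n)) in H1 by (field; lra).
  replace ((INR (kk beta n) / INR n + 2 * (1 / INR n)) * INR n) with (INR (kk beta n) + 2) in H2
    by (field; lra).
  split; [apply (INR_le 1); simpl INR | apply INR_le; rewrite plus_INR; simpl (INR 2)]; lra.
Qed.

Let rho : R := 2 * beta - 1.
Let bound (d : R) (n : nat) : R := (2 * (kratio beta n + 1 / INR n) - 1) ^ 3 + d.

Lemma eventually_xstar_kraw_bound (d : R) : 0 < d <= 1 ->
  eventually (fun n => forall i, (3 <= i)%nat -> (2 * i <= n)%nat ->
    Rabs (kraw_norm n (kk beta n) i) <= bound d n /\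
    Rabs (kraw_norm n (S (kk beta n)) i) <= bound d n).
Proof.
  intros Hd. assert (Hrho : 0 < rho < 1) by (unfold rho; lra).
  assert (Ht := is_lim_seq_kratio). assert (He := is_lim_seq_inv_INR).
  assert (Ekn : eventually (fun n => (kk beta n <= n)%nat))
    by (eapply filter_imp; [|exact eventually_kk_range]; intros n Hn; lia).
  assert (ESkn : eventually (fun n => (S (kk beta n) <= n)%nat))
    by (eapply filter_imp; [|exact eventually_kk_range]; intros n Hn; lia).
  assert (Bk := eventually_kraw_norm_abs_le rho d (kk beta) Hrho Hd Ekn
    ltac:(apply (is_lim_seq_eq_limit (fun n => 2 * kratio beta n - 1) (2 * beta - 1));
      [lim_arith | reflexivity])).
  assert (BSk := eventually_kraw_norm_abs_le rho d (fun n => S (kk beta n)) Hrho Hd ESkn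
    ltac:(apply is_lim_seq_ext_loc with (u := fun n => 2 * (kratio beta n + 1 / INR n) - 1);
      [exists 1%nat; intros n Hn; rewrite kratio_succ by lia; reflexivity
      | eapply is_lim_seq_eq_limit; [lim_arith | unfold rho; ring]])).
  assert (Etn := eventually_gt_of_lim _ _ (1 / 2) Ht ltac:(lra)).
  eapply filter_imp; [|exact (filter_and _ _ Etn (filter_and _ _ Bk (filter_and _ _ BSk ESkn)))].
  intros n [Htn [Bkn [BSkn Hn]]] i Hi3 Hin.
  specialize (Bkn i Hi3 Hin). specialize (BSkn i Hi3 Hin).
  assert (He0 : 0 < 1 / INR n) by (apply Rdiv_lt_0_compat; [lra | apply lt_0_INR; lia]).
  rewrite kratio_succ in BSkn by lia. fold (kratio beta n) in Bkn.
  assert (Hpow : (2 * kratio beta n - 1) ^ 3 <= (2 * (kratio beta n + 1 / INR n) - 1) ^ 3)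
    by (apply pow_incr; lra).
  assert (Hpos : 0 <= (2 * (kratio beta n + 1 / INR n) - 1) ^ 3) by (apply pow_le; lra).
  unfold bound. split; (eapply Rle_trans; [eassumption | apply Rmax_lub; lra]).
Qed.

(* In the limit the constraints i = n - 1 and i = n - 2 are slack, and so are the generic
   ones under |u_i| <= bound d as long as rho^3 + d < rho^2. *)
Lemma eventually_xstar_margins (d : R) : 0 < d -> rho ^ 3 + d < rho * rho ->
  eventually (fun n =>
    -1 < ((1 - 2 * kratio beta n) - bound d n) * weight_k (kratio beta n) (1 / INR n)
         + ((1 - 2 * (kratio beta n + 1 / INR n)) - bound d n)
           * weight_Sk (kratio beta n) (1 / INR n) /\
    -1 < 2 * (1 - 2 * (kratio beta n + 1 / INR n)) * weight_Sk (kratio beta n) (1 / INR n) /\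
    -1 < ((1 - 2 * kratio beta n) - ((1 - 2 * kratio beta n) ^ 2 - 1 / INR n) / (1 - 1 / INR n))
           * weight_k (kratio beta n) (1 / INR n)
         + ((1 - 2 * (kratio beta n + 1 / INR n))
            + ((1 - 2 * (kratio beta n + 1 / INR n)) ^ 2 - 1 / INR n) / (1 - 1 / INR n))
           * weight_Sk (kratio beta n) (1 / INR n)).
Proof.
  intros Hd Hlt. assert (Hrho : 0 < rho < 1) by (unfold rho; lra).
  destruct is_lim_seq_xstar_weights as [_ [HA HB]].
  assert (Ht := is_lim_seq_kratio). assert (He := is_lim_seq_inv_INR).
  assert (HM : is_lim_seq (bound d) (rho ^ 3 + d))
    by (eapply is_lim_seq_eq_limit; [unfold bound; lim_arith | unfold rho; ring]).
  apply filter_and; [|apply filter_and].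
  - apply (eventually_gt_of_lim _ (- (rho + rho ^ 3 + d) / (rho * (1 + rho)))).
    + eapply is_lim_seq_eq_limit; [lim_arith|].
      unfold weight_k, weight_Sk, weight_den, rho. field. repeat split; lra.
    + apply Rmult_lt_reg_r with (rho * (1 + rho)); [nra|].
      replace (- (rho + rho ^ 3 + d) / (rho * (1 + rho)) * (rho * (1 + rho)))
        with (- (rho + rho ^ 3 + d)) by (field; lra).
      lra.
  - apply (eventually_gt_of_lim _ (- (1 - rho))); [eapply is_lim_seq_eq_limit; [lim_arith|] | lra].
    unfold weight_Sk, weight_den, rho. field. lra.
  - apply (eventually_gt_of_lim _ (- (1 + rho ^ 3) / (1 + rho))).
    + eapply is_lim_seq_eq_limit; [lim_arith; lra|].
      unfold weight_k, weight_Sk, weight_den, rho. field. repeat split; lra.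
    + apply Rmult_lt_reg_r with (1 + rho); [lra|].
      replace (- (1 + rho ^ 3) / (1 + rho) * (1 + rho)) with (- (1 + rho ^ 3)) by (field; lra).
      simpl. nra.
Qed.

Lemma xstar_eventually_feasible : eventually (fun n => LP_feasible n (xstar beta n)).
Proof.
  assert (Hrho : 0 < rho < 1) by (unfold rho; lra).
  set (d := rho * rho * (1 - rho) / 2).
  assert (Hd : 0 < d <= 1)
    by (unfold d; split; [apply Rdiv_lt_0_compat; [apply Rmult_lt_0_compat|]; nra | nra]).
  assert (Hlt : rho ^ 3 + d < rho * rho)
    by (assert (0 < rho * rho * (1 - rho)) by (apply Rmult_lt_0_compat; nra); unfold d; simpl; lra).
  destruct is_lim_seq_xstar_weights as [HD [HA HB]].
  assert (EDn := eventually_gt_of_lim _ _ 0 HD ltac:(lra)).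
  assert (EAn := eventually_gt_of_lim _ _ 0 HA ltac:(unfold weight_k, weight_den;
    apply Rdiv_lt_0_compat; nra)).
  assert (EBn := eventually_gt_of_lim _ _ 0 HB ltac:(unfold weight_Sk, weight_den;
    apply Rdiv_lt_0_compat; lra)).
  assert (E := filter_and _ _ eventually_kk_range (filter_and _ _ EDn (filter_and _ _ EAn
    (filter_and _ _ EBn (filter_and _ _ (eventually_xstar_kraw_bound d Hd)
    (eventually_xstar_margins d ltac:(lra) Hlt)))))).
  eapply filter_imp; [|exact E].
  intros n [[Hk Hkn] [HDn [HAn [HBn [Hbound [Hgen [Hn1 Hn2]]]]]]].
  apply (xstar_feasible beta n (bound d n)); try assumption; lra.
Qed.

Lemma is_lim_seq_xstar_objective (a : R) : 0 < a ->
  is_lim_seq (fun n => LP_objective n a (xstar beta n)) (limit_value a beta).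
Proof.
  intros Ha. destruct is_lim_seq_xstar_weights as [_ [HA HB]].
  assert (Ht := is_lim_seq_kratio). assert (He := is_lim_seq_inv_INR).
  apply is_lim_seq_ext_loc with (u := fun n =>
    - ((1 + (1 - 2 * kratio beta n) * (1 / a - 1)) * weight_k (kratio beta n) (1 / INR n)
       + (1 + (1 - 2 * (kratio beta n + 1 / INR n)) * (1 / a - 1))
         * weight_Sk (kratio beta n) (1 / INR n))).
  - eapply filter_imp; [|exact eventually_kk_range]. intros n [H1 H2].
    rewrite xstar_objective by lia. reflexivity.
  - eapply is_lim_seq_eq_limit; [lim_arith|].
    unfold limit_value, weight_k, weight_Sk, weight_den. field. lra.
Qed.

End XstarAsymptotics.

Lemma limit_value_eq (a beta : R) : 0 < a -> 1 / 2 < beta ->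
  limit_value a beta = ((2 * beta - 1) * (1 / a - 1) - 1) / ((2 * beta - 1) * (2 * beta)).
Proof. intros Ha Hb. unfold limit_value. field. split; lra. Qed.

Lemma limit_value_at_optimum (a : R) : 0 < a < 1 / 4 ->
  1 / 2 < 1 / (2 * (1 - sqrt a)) < 1 /\ limit_value a (1 / (2 * (1 - sqrt a))) = theta a.
Proof.
  intros Ha. set (s := sqrt a).
  assert (Hs2 : s * s = a) by (apply sqrt_sqrt; lra).
  assert (Hs0 : 0 < s) by (apply sqrt_lt_R0; lra).
  assert (Hs1 : s < 1 / 2) by nra.
  split.
  - split; apply Rmult_lt_reg_r with (2 * (1 - s)); try lra; field_simplify; lra.
  - unfold theta. destruct (Rlt_dec a (1 / 4)) as [_ | H]; [|lra].
    fold s. unfold limit_value. rewrite <- Hs2. field. repeat split; lra.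
Qed.

Lemma limit_value_le_theta (a beta : R) : 0 < a <= 1 / 2 -> 1 / 2 < beta < 1 ->
  limit_value a beta <= theta a.
Proof.
  intros Ha Hb. rewrite limit_value_eq by lra.
  set (y := 2 * beta - 1). assert (Hy : 0 < y < 1) by (unfold y; lra).
  replace (2 * beta) with (y + 1) by (unfold y; ring).
  unfold theta. destruct (Rlt_dec a (1 / 4)) as [Hlt | Hge].
  - set (s := sqrt a).
    assert (Hs2 : s * s = a) by (apply sqrt_sqrt; lra).
    assert (Hs0 : 0 < s) by (apply sqrt_lt_R0; lra).
    rewrite <- Hs2.
    apply Rmult_le_reg_r with (y * (y + 1) * (s * s)); [apply Rmult_lt_0_compat; nra|].
    replace ((y * (1 / (s * s) - 1) - 1) / (y * (y + 1)) * (y * (y + 1) * (s * s)))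
      with (y * (1 - s * s) - s * s) by (field; split; lra).
    replace ((1 - s) ^ 2 / (s * s) * (y * (y + 1) * (s * s))) with ((1 - s) ^ 2 * (y * (y + 1)))
      by (field; lra).
    (* equality exactly at y = s / (1 - s), i.e. at the optimal beta *)
    assert (0 <= ((1 - s) * y - s) ^ 2) by apply pow2_ge_0. nra.
  - assert (Hc : 1 / a <= 4).
    { unfold Rdiv. rewrite Rmult_1_l. replace 4 with (/ (1 / 4)) by field.
      apply Rinv_le_contravar; lra. }
    apply Rmult_le_reg_r with (2 * y * (y + 1)); [nra|].
    replace ((y * (1 / a - 1) - 1) / (y * (y + 1)) * (2 * y * (y + 1)))
      with (2 * (y * (1 / a - 1) - 1)) by (field; lra).
    replace ((1 / (2 * a) - 1) * (2 * y * (y + 1))) with ((1 / a - 2) * y * (y + 1)) by (field; lra).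
    assert (0 <= (1 - y) * (2 - (1 / a - 2) * y)) by (apply Rmult_le_pos; nra). nra.
Qed.

Lemma limit_value_approaches_theta (a M : R) : 1 / 4 <= a <= 1 / 2 -> M < theta a ->
  exists beta, 1 / 2 < beta < 1 /\ M < limit_value a beta.
Proof.
  intros Ha HM. unfold theta in HM. destruct (Rlt_dec a (1 / 4)) as [|_]; [lra|].
  set (c := 1 / a - 1).
  assert (Hc : 1 <= c <= 3).
  { unfold c, Rdiv. rewrite Rmult_1_l.
    replace 1 with (/ (1 / 2) - 1) at 1 by field. replace 3 with (/ (1 / 4) - 1) by field.
    split; apply Rplus_le_compat_r, Rinv_le_contravar; lra. }
  replace (1 / (2 * a) - 1) with ((c - 1) / 2) in HM by (unfold c; field; lra).
  (* limit_value a beta -> (c - 1) / 2 as beta -> 1; take 2 beta - 1 = 1 - ep *)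
  set (ep := Rmin (1 / 2) (((c - 1) / 2 - M) / 4)).
  assert (Hep : 0 < ep <= 1 / 2) by (unfold ep; split; [apply Rmin_pos; lra | apply Rmin_l]).
  assert (Hep2 : ep <= ((c - 1) / 2 - M) / 4) by (unfold ep; apply Rmin_r).
  exists (1 - ep / 2). split; [lra|].
  rewrite limit_value_eq by lra. fold c.
  replace (2 * (1 - ep / 2) - 1) with (1 - ep) by field.
  replace (2 * (1 - ep / 2)) with (2 - ep) by field.
  assert (Hgap : (c - 1) / 2 - ((1 - ep) * c - 1) / ((1 - ep) * (2 - ep)) <= 2 * ep).
  { apply Rmult_le_reg_r with ((1 - ep) * (2 - ep)); [nra|].
    replace (((c - 1) / 2 - ((1 - ep) * c - 1) / ((1 - ep) * (2 - ep))) * ((1 - ep) * (2 - ep)))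
      with (ep * (2 - (c - 1) * (1 - ep)) / 2) by (field; lra).
    assert (0 <= (c - 1) * (1 - ep)) by (apply Rmult_le_pos; lra).
    assert (3 / 4 <= (1 - ep) * (2 - ep)) by nra. nra. }
  lra.
Qed.

Lemma theta_is_lub (a : R) : 0 < a <= 1 / 2 ->
  is_lub (fun v => exists beta, 1 / 2 < beta < 1 /\ v = limit_value a beta) (theta a).
Proof.
  intros Ha. split.
  - intros v [beta [Hb ->]]. exact (limit_value_le_theta a beta Ha Hb).
  - intros M HM. apply Rnot_lt_le. intros HMlt.
    destruct (Rlt_dec a (1 / 4)) as [Hlt | Hge].
    + destruct (limit_value_at_optimum a ltac:(lra)) as [Hb Hv].
      assert (limit_value a (1 / (2 * (1 - sqrt a))) <= M) by (apply HM; eexists; split; [exact Hb | reflexivity]).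
      lra.
    + destruct (limit_value_approaches_theta a M ltac:(lra) HMlt) as [beta [Hb Hv]].
      assert (limit_value a beta <= M) by (apply HM; exists beta; split; [exact Hb | reflexivity]).
      lra.
Qed.

Lemma liminf_Lambda_ge_theta (a : R) : 0 < a <= 1 / 2 ->
  forall eps : R, eps > 0 -> exists N : nat, forall n : nat, (n >= N)%nat ->
    forall L : R, is_lub (LP_values n a) L -> theta a - eps <= L.
Proof.
  intros Ha eps Heps.
  assert (Hbeta : exists beta, 1 / 2 < beta < 1 /\ theta a - eps < limit_value a beta).
  { apply NNPP. intros Hno. destruct (theta_is_lub a Ha) as [_ Hleast].
    assert (theta a <= theta a - eps); [|lra].
    apply Hleast. intros v [beta [Hb ->]]. apply Rnot_lt_le. intros Hlt. apply Hno.
    exists beta. split; assumption. }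
  destruct Hbeta as [beta [Hb Hv]].
  destruct (filter_and _ _ (xstar_eventually_feasible beta Hb)
    (eventually_gt_of_lim _ _ _ (is_lim_seq_xstar_objective beta Hb a (proj1 Ha)) Hv)) as [N HN].
  exists N. intros n Hn L [HL _]. destruct (HN n Hn) as [Hfeas Hobj].
  assert (LP_objective n a (xstar beta n) <= L) by (apply HL; exists (xstar beta n); split; [exact Hfeas | reflexivity]).
  lra.
Qed.

Theorem mainTheorem5 (a : R) (ha : 0 < a <= 1/2) :
  (forall beta : R, 1/2 < beta < 1 ->
     (exists N : nat, forall n : nat, (n >= N)%nat -> LP_feasible n (xstar beta n)) /\
     Un_cv (fun n => LP_objective n a (xstar beta n)) (limit_value a beta)) /\
  (forall eps : R, eps > 0 -> exists N : nat, forall n : nat, (n >= N)%nat ->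
     forall L : R, is_lub (LP_values n a) L -> theta a - eps <= L) /\
  is_lub (fun y => exists beta : R, 1/2 < beta < 1 /\ y = limit_value a beta) (theta a) /\
  (a < 1/4 ->
     1/2 < 1 / (2 * (1 - sqrt a)) < 1 /\
     limit_value a (1 / (2 * (1 - sqrt a))) = theta a).
Proof.
  split; [|split; [|split]].
  - intros beta Hb. split.
    + destruct (xstar_eventually_feasible beta Hb) as [N HN]. exists N. exact HN.
    + apply is_lim_seq_Reals, is_lim_seq_xstar_objective; [exact Hb | apply ha].
  - exact (liminf_Lambda_ge_theta a ha).
  - exact (theta_is_lub a ha).
  - intros H. apply limit_value_at_optimum. lra.
Qed.
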